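(* Given a finite set of types $T$ and a positive integer $n$, it holds that $\mathrm{PoA}(\mathcal{G}_T^n)=\mathrm{GPoA}(\mathcal{G}_T^n)$. Furthermore, there exists an $n$-player game $G\in\mathcal{G}_T^n$ with $|\mathcal{R}|\le 2n$ resources and $\mathrm{PoA}(G)=\mathrm{GPoA}(\mathcal{G}_T^n)$.
   Context: Fix a positive integer $n$ and a finite set of resource types $T=\{(c_1,f_1),\dots,(c_m,f_m)\}$, where $c_t,f_t:\{1,\dots,n\}\to\mathbb{R}$, with the convention $c_t(0)=0$. The class $\mathcal{G}_T^n$ consists of all local resource allocation games $G$ of the following form: agent set $N=\{1,\dots,n\}$; a finite set of resources $\mathcal{R}$; for each $r\in\mathcal{R}$ a value $v_r\ge0$ and a type $(c,f)\in T$, giving $c_r=v_r c$ and $f_r=v_r f$; for each agent $i$ an action set $\mathcal{A}_i\subseteq 2^{\mathcal{R}}$, with $\mathcal{A}=\mathcal{A}_1\times\dots\times\mathcal{A}_n$. For $a\in\mathcal{A}$, $|a|_r$ is the number of agents $i$ with $r\in a_i$; the system cost is $C(a)=\sum_{r\in\mathcal{R}}c_r(|a|_r)$ and the local cost of agent $i$ is $J_i(a)=\sum_{r\in a_i}f_r(|a|_r)$. A Nash equilibrium is $a^{ne}\in\mathcal{A}$ with $J_i(a^{ne})\le J_i(a_i,a^{ne}_{-i})$ for all $a_i\in\mathcal{A}_i$, $i\in N$; $\mathrm{PoA}(G)=\max_{a\in\mathrm{NE}(G)}C(a)/\min_{a\in\mathcal{A}}C(a)$, and $\mathrm{PoA}(\mathcal{G}_T^n)=\sup_{G\in\mathcal{G}_T^n}\mathrm{PoA}(G)$.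 The generalized price-of-anarchy of the class is $\mathrm{GPoA}(\mathcal{G}_T^n)=\inf\{\lambda/(1-\mu):\lambda>0,\mu<1\}$ over those $(\lambda,\mu)$ such that for every $G\in\mathcal{G}_T^n$ and all $a,a'\in\mathcal{A}$: $\sum_{i=1}^nJ_i(a'_i,a_{-i})-\sum_{i=1}^nJ_i(a)+C(a)\le\lambda C(a')+\mu C(a)$. *)

From HB Require Import structures.
From mathcomp Require Import all_boot all_order all_algebra.
From mathcomp Require Import classical_sets reals constructive_ereal ereal.
Set Implicit Arguments. Unset Strict Implicit. Unset Printing Implicit Defensive.
Import Order.TTheory GRing.Theory Num.Theory.
Local Open Scope ring_scope.
Local Open Scope classical_set_scope.

(* R   : the real numbers (any realType),
   n   : number of agents (agents are 'I_n),
   Ty  : finite index type of the resource types T = {(c t, f t) | t : Ty},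
   c f : Ty -> nat -> R, the system-cost / local-cost functions of each type
         (only their values on 0..n matter; c t 0 = 0 is a hypothesis).   *)

Record game (R : realType) (n : nat) (Ty : finType) (Res : finType) := Game {
  gval : Res -> R;
  gty  : Res -> Ty;
  gact : 'I_n -> {set {set Res}}
}.

Definition valid_game R n Ty Res (G : @game R n Ty Res) : Prop :=
  (forall r, 0 <= gval G r) /\ (forall i, gact G i != finset.set0).

Section Game.
Variables (R : realType) (n : nat) (Ty : finType) (c f : Ty -> nat -> R).
Variables (Res : finType) (G : @game R n Ty Res).

Definition profile := 'I_n -> {set Res}.

Definition feasible (a : profile) : Prop := forall i, a i \in gact G i.

Definition load (a : profile) (r : Res) : nat := #|[set i : 'I_n | r \in a i]|.

Definition syscost (a : profile) : R :=
  \sum_(r : Res) gval G r * c (gty G r) (load a r).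

Definition loccost (i : 'I_n) (a : profile) : R :=
  \sum_(r in a i) gval G r * f (gty G r) (load a r).

Definition upd (a : profile) (i : 'I_n) (ai : {set Res}) : profile :=
  fun j => if j == i then ai else a j.

Definition is_NE (a : profile) : Prop :=
  feasible a /\
  forall i ai, ai \in gact G i -> loccost i a <= loccost i (upd a i ai).

Definition is_opt (a : profile) : Prop :=
  feasible a /\ forall b, feasible b -> syscost a <= syscost b.

(* the optimal (minimal) system cost is positive, so PoA(G) is a
   well-defined ratio *)
Definition pos_opt : Prop := forall a, is_opt a -> 0 < syscost a.

Definition gamePoA : \bar R :=
  ereal_sup [set x | exists ne op, is_NE ne /\ is_opt op /\
                                x = (syscost ne / syscost op)%:E].

End Game.

Section Class.
Variables (R : realType) (n : nat) (Ty : finType) (c f : Ty -> nat -> R).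

Definition classPoA : \bar R :=
  ereal_sup [set x | exists (Res : finType) (G : @game R n Ty Res),
     valid_game G /\ pos_opt c G /\ x = gamePoA c f G].

Definition gpoa_feasible (lam mu : R) : Prop :=
  0 < lam /\ mu < 1 /\
  forall (Res : finType) (G : @game R n Ty Res), valid_game G ->
  forall a a' : profile n Res, feasible G a -> feasible G a' ->
    \sum_(i < n) loccost f G i (upd a i (a' i)) - \sum_(i < n) loccost f G i a
      + syscost c G a <= lam * syscost c G a' + mu * syscost c G a.

(* GPoA(G_T^n) = inf { lambda / (1 - mu) } (= +oo if no feasible pair) *)
Definition classGPoA : \bar R :=
  ereal_inf [set x | exists lam mu, gpoa_feasible lam mu /\
                                x = (lam / (1 - mu))%:E].
End Class.

(* Summing all unilateral deviations resource by resource gives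
     sum_i J_i(a'_i, a_-i) - sum_i J_i(a) = sum_r v_r delta_t(A_r, X_r, B_r),
   delta_t(A, X, B) = B f_t(A+X+1) - A f_t(A+X), where A_r, X_r, B_r count the agents
   that leave, stay on or join r.  Hence (lambda, mu) certifies the GPoA as soon as
   delta + c(A+X) <= lambda c(X+B) + mu c(A+X) holds for every such triple, and the Nash
   condition gives PoA <= GPoA.  In nu = 1/(1-mu), rho = lambda/(1-mu) these triple
   inequalities form a finite linear program with two unknowns, so its optimum rho is
   attained by a mixture of two triples (one with delta >= 0, one with delta < 0) in
   which delta cancels.  Laying the two triples out circularly over n agents and 2n
   resources gives a game where one profile is a Nash equilibrium costing exactly rho
   times another feasible profile, so PoA >= rho >= GPoA. *)

From Pilot Require Import Defs.
From mathcomp Require Import all_boot all_order all_algebra.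
From mathcomp Require Import boolp reals constructive_ereal ereal.
From mathcomp Require Import ring lra.
Import Order.TTheory GRing.Theory Num.Theory.
Local Open Scope ring_scope.
Set Implicit Arguments. Unset Strict Implicit. Unset Printing Implicit Defensive.

Lemma sumr_cond_const (V : nmodType) (I : finType) (P : pred I) (x : V) :
  \sum_(i | P i) x = x *+ #|[set i | P i]|.
Proof. by rewrite -sumr_const; apply: eq_bigl => i; rewrite inE. Qed.

Lemma card_set_split (I : finType) (P Q : pred I) :
  #|[set i | P i]| = (#|[set i | P i && Q i]| + #|[set i | P i && ~~ Q i]|)%N.
Proof. by rewrite -!sum1dep_card (bigID Q). Qed.

(* [load] is stated in Defs with a classical set comprehension. *)
Lemma loadE n (Res : finType) (a : profile n Res) r :
  load a r = #|[set i | r \in a i]|.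
Proof.
apply: eq_card => i; rewrite inE.
by apply/idP/idP => [/classical_sets.set_mem|/classical_sets.mem_set].
Qed.

Section Deviation.
Variables (R : realType) (n : nat) (Ty : finType) (c f : Ty -> nat -> R).

Definition dev_delta (t : Ty) (A X B : nat) : R :=
  B%:R * f t (A + X).+1 - A%:R * f t (A + X).

Variables (Res : finType) (G : game R n Ty Res).

Lemma load_upd (a : profile n Res) i (S : {set Res}) r : r \in S ->
  load (upd a i S) r = ((r \notin a i) + load a r)%N.
Proof.
move=> rS; rewrite !loadE; case: (boolP (r \in a i)) => ari /=.
  by apply: eq_card => j; rewrite !inE /upd; case: eqP => // ->; rewrite ari rS.
have -> : [set j | r \in upd a i S j] = i |: [set j | r \in a j].
  by apply/setP => j; rewrite !inE /upd; case: eqP => [->|]; rewrite ?rS.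
by rewrite cardsU1 inE ari.
Qed.

Lemma sum_loccost (a : profile n Res) :
  \sum_(i < n) loccost f G i a =
  \sum_r gval G r * ((load a r)%:R * f (gty G r) (load a r)).
Proof.
rewrite /loccost; under eq_bigr => i _ do rewrite big_mkcond /=.
rewrite exchange_big /=; apply: eq_bigr => r _.
by rewrite -big_mkcond /= sumr_cond_const mulr_natl mulrnAr loadE.
Qed.

Variables a a' : profile n Res.

Definition leavers r := #|[set i | (r \in a i) && (r \notin a' i)]|.
Definition stayers r := #|[set i | (r \in a i) && (r \in a' i)]|.
Definition joiners r := #|[set i | (r \in a' i) && (r \notin a i)]|.

Lemma load_leavers_stayers r : load a r = (leavers r + stayers r)%N.
Proof. by rewrite loadE (card_set_split _ (fun i => r \in a' i)) addnC. Qed.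

Lemma load_stayers_joiners r : load a' r = (stayers r + joiners r)%N.
Proof.
rewrite loadE (card_set_split _ (fun i => r \in a i)); congr (_ + _)%N.
by apply: eq_card => i; rewrite !inE andbC.
Qed.

Lemma leavers_stayers_joiners_le r : (leavers r + stayers r + joiners r <= n)%N.
Proof.
rewrite -load_leavers_stayers loadE -[n in (_ <= n)%N]card_ord.
rewrite -(cardsC [set i | r \in a i]) leq_add2l.
by apply/subset_leq_card/subsetP => i; rewrite !inE => /andP[].
Qed.

Lemma sum_loccost_upd :
  \sum_(i < n) loccost f G i (upd a i (a' i)) =
  \sum_r gval G r * ((stayers r)%:R * f (gty G r) (load a r)
                    + (joiners r)%:R * f (gty G r) (load a r).+1).
Proof.
rewrite /loccost; under eq_bigr => i _ do rewrite {1}/upd eqxx big_mkcond /=.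
rewrite exchange_big /=; apply: eq_bigr => r _.
rewrite -big_mkcond /= (bigID (fun i => r \in a i)) /= mulrDr.
rewrite (eq_bigr (fun=> gval G r * f (gty G r) (load a r))); last first.
  by move=> i /andP[ra' ra]; rewrite load_upd // ra.
rewrite [X in _ + X](eq_bigr (fun=> gval G r * f (gty G r) (load a r).+1)); last first.
  by move=> i /andP[ra' ra]; rewrite load_upd // (negbTE ra).
rewrite !sumr_cond_const !mulr_natl !mulrnAr; congr (_ *+ _ + _).
by apply: eq_card => i; rewrite !inE andbC.
Qed.

Lemma sum_deviation :
  \sum_(i < n) loccost f G i (upd a i (a' i)) - \sum_(i < n) loccost f G i a =
  \sum_r gval G r * dev_delta (gty G r) (leavers r) (stayers r) (joiners r).
Proof.
rewrite sum_loccost_upd sum_loccost -sumrB; apply: eq_bigr => r _.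
rewrite /dev_delta -load_leavers_stayers load_leavers_stayers natrD.
set v := gval G r; set F := f (gty G r); ring.
Qed.

Lemma resource_smooth_sum (lam mu : R) : valid_game G ->
  (forall t A X B, (A + X + B <= n)%N ->
     dev_delta t A X B + c t (A + X) <= lam * c t (X + B) + mu * c t (A + X)) ->
  \sum_(i < n) loccost f G i (upd a i (a' i)) - \sum_(i < n) loccost f G i a
    + syscost c G a <= lam * syscost c G a' + mu * syscost c G a.
Proof.
move=> [v_ge0 _] smooth; rewrite sum_deviation /syscost !mulr_sumr -!big_split /=.
apply: ler_sum => r _; rewrite load_leavers_stayers load_stayers_joiners.
have := ler_wpM2l (v_ge0 r) (smooth (gty G r) _ _ _ (leavers_stayers_joiners_le r)).
by rewrite !mulrDr !mulrA ![_ * gval G r]mulrC.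
Qed.

End Deviation.

Section Bounds.
Variables (R : realType) (n : nat) (Ty : finType) (c f : Ty -> nat -> R).

Lemma NE_cost_bound (lam mu : R) (Res : finType) (G : game R n Ty Res) ne b :
  gpoa_feasible n c f lam mu -> valid_game G -> is_NE f G ne -> feasible G b ->
  (1 - mu) * syscost c G ne <= lam * syscost c G b.
Proof.
move=> [_ [_ smooth]] vG [fne ne_best] fb.
have := smooth Res G vG ne b fne fb.
have : 0 <= \sum_(i < n) loccost f G i (upd ne i (b i)) - \sum_(i < n) loccost f G i ne.
  by rewrite subr_ge0; apply: ler_sum => i _; exact: ne_best.
rewrite mulrBl mul1r; lra.
Qed.

Lemma classPoA_le_classGPoA : (classPoA n c f <= classGPoA n c f)%E.
Proof.
apply: le_ereal_inf_tmp => _ [lam [mu [feas ->]]].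
apply: ge_ereal_sup => _ [Res [G [vG [pos ->]]]].
apply: ge_ereal_sup => _ [ne [op [neNE [op_opt ->]]]].
have [lam_gt0 [mu_lt1 _]] := feas.
have := NE_cost_bound feas vG neNE (proj1 op_opt).
rewrite lee_fin ler_pdivrMr ?pos // mulrAC ler_pdivlMr ?subr_gt0 //.
by rewrite mulrC.
Qed.

Lemma pos_opt_of_NE (lam mu : R) (Res : finType) (G : game R n Ty Res) ne :
  gpoa_feasible n c f lam mu -> valid_game G -> is_NE f G ne ->
  0 < syscost c G ne -> pos_opt c G.
Proof.
move=> feas vG neNE Cne_gt0 a [fa _]; have [lam_gt0 [mu_lt1 _]] := feas.
have ne_part : 0 < (1 - mu) * syscost c G ne by rewrite mulr_gt0 ?subr_gt0.
by have := lt_le_trans ne_part (NE_cost_bound feas vG neNE fa); rewrite pmulr_rgt0.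
Qed.

Lemma opt_exists (Res : finType) (G : game R n Ty Res) :
  valid_game G -> exists op, is_opt c G op.
Proof.
move=> [_ act_neq0].
pose P (g : {ffun 'I_n -> {set Res}}) := [forall i, g i \in gact G i].
have [g0 Pg0] : exists g0, P g0.
  exists [ffun i => odflt set0 [pick A in gact G i]]; apply/forallP => i.
  rewrite ffunE; case: pickP => //= none.
  by case/set0Pn: (act_neq0 i) => A A_in; move: (none A); rewrite /= A_in.
case: (arg_minP (fun g : {ffun _ -> _} => syscost c G g) Pg0) => g /forallP Pg g_min.
exists g; split => // b fb.
have -> : b = [ffun i => b i] by apply: funext => i; rewrite ffunE.
by apply: g_min; apply/forallP => i; rewrite ffunE.
Qed.

Lemma gamePoA_ge (Res : finType) (G : game R n Ty Res) ne b (x : R) :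
  valid_game G -> pos_opt c G -> is_NE f G ne -> feasible G b ->
  0 <= x -> syscost c G ne = x * syscost c G b -> (x%:E <= gamePoA c f G)%E.
Proof.
move=> vG pos neNE fb x_ge0 Cne; have [op op_opt] := opt_exists vG.
have Cop_gt0 := pos op op_opt.
apply: le_trans (ereal_sup_ubound _) => /=; last by exists ne, op.
rewrite lee_fin ler_pdivlMr // Cne ler_wpM2l //.
exact: (proj2 op_opt).
Qed.

End Bounds.

Section Certificate.
Variables (R : realType) (n : nat) (Ty : finType) (c f : Ty -> nat -> R).

Definition lp_feasible (nu rho : R) : Prop :=
  forall t A X B, (A + X + B <= n)%N ->
    nu * dev_delta f t A X B + c t (A + X) <= rho * c t (X + B).

Variables (nu rho : R).
Hypotheses (nu_gt0 : 0 < nu) (rho_gt0 : 0 < rho) (lp : lp_feasible nu rho).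

Lemma gpoa_feasible_lp : gpoa_feasible n c f (rho / nu) (1 - nu^-1).
Proof.
have inu_gt0 : 0 < nu^-1 by rewrite invr_gt0.
split; first by rewrite divr_gt0.
split; first by rewrite ltrBlDr ltrDl.
move=> Res G vG a a' _ _; apply: resource_smooth_sum => // t A X B hn.
have := ler_wpM2l (ltW inu_gt0) (@lp t A X B hn).
rewrite mulrDr mulrA mulVf ?gt_eqF // mul1r => h.
rewrite mulrBl mul1r; lra.
Qed.

Lemma classGPoA_le_lp : (classGPoA n c f <= rho%:E)%E.
Proof.
apply: ereal_inf_lbound; exists (rho / nu), (1 - nu^-1); split.
  exact: gpoa_feasible_lp.
by rewrite opprB addrC subrK invrK divfK ?gt_eqF.
Qed.

End Certificate.

Section PairMixing.
Variables (R : realType) (K : finType) (D : pred K) (g a b : K -> R).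
Hypothesis b_ge0 : {in D, forall k, 0 <= b k}.
Hypothesis b_eq0 : {in D, forall k, b k = 0 -> g k < 0 \/ g k = 0 /\ a k = 0}.

Definition mixable (pq : K * K) :=
  [&& D pq.1, D pq.2, 0 <= g pq.1, 0 < b pq.1 & g pq.2 < 0].

Definition mix (h : K -> R) (pq : K * K) := - g pq.2 * h pq.1 + g pq.1 * h pq.2.

Definition mix_ratio pq := mix a pq / mix b pq.

Lemma mix_b_gt0 pq : mixable pq -> 0 < mix b pq.
Proof.
case/and5P=> Dp Dq gp_ge0 bp_gt0 gq_lt0; rewrite /mix ltr_pwDl ?mulr_ge0 ?b_ge0 //.
by rewrite mulr_gt0 ?oppr_gt0.
Qed.

Variable pq0 : K * K.
Hypothesis mixable_pq0 : mixable pq0.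

Definition best_mix := [arg max_(pq > pq0 | mixable pq) mix_ratio pq]%O.
Definition mix_max := mix_ratio best_mix.

Lemma best_mixP : mixable best_mix /\ forall pq, mixable pq -> mix_ratio pq <= mix_max.
Proof.
rewrite /mix_max /best_mix.
case: (@arg_maxP _ _ _ pq0 mixable mix_ratio mixable_pq0) => pq mpq pq_max.
by split=> // pq' /pq_max.
Qed.

Lemma mix_le_max pq : mixable pq -> mix a pq <= mix_max * mix b pq.
Proof.
move=> mpq; rewrite -ler_pdivrMr ?mix_b_gt0 //.
exact: (proj2 best_mixP).
Qed.

Lemma mix_max_attained : mix a best_mix = mix_max * mix b best_mix.
Proof. by rewrite /mix_max /mix_ratio divfK // gt_eqF // mix_b_gt0 // (proj1 best_mixP). Qed.

Definition slack k := (a k - mix_max * b k) / - g k.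

Definition steepest := [arg max_(k > pq0.2 | D k && (g k < 0)) slack k]%O.
Definition mix_nu := slack steepest.

Lemma steepestP : [/\ D steepest, g steepest < 0 &
  forall k, D k -> g k < 0 -> slack k <= mix_nu].
Proof.
have q0P : D pq0.2 && (g pq0.2 < 0) by case/and5P: mixable_pq0 => _ -> _ _ ->.
rewrite /mix_nu /steepest.
case: (@arg_maxP _ _ _ pq0.2 (fun k => D k && (g k < 0)) slack q0P) => k.
move=> /andP[Dk gk_lt0] k_max.
by split=> // k' Dk' gk'_lt0; apply: k_max; rewrite Dk'.
Qed.

Lemma mix_dual_feasible k : D k -> mix_nu * g k + a k <= mix_max * b k.
Proof.
move=> Dk; have [Ds gs_lt0 s_max] := steepestP.
have ngs_gt0 : 0 < - g steepest by rewrite oppr_gt0.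
have [gk_lt0|gk_ge0] := ltP (g k) 0.
  have := s_max k Dk gk_lt0.
  rewrite /slack ler_pdivrMr ?oppr_gt0 //; lra.
have [bk_eq0|bk_neq0] := eqVneq (b k) 0.
  by case: (b_eq0 Dk bk_eq0) => [|[-> ->]]; rewrite ?bk_eq0 ?mulr0 ?addr0 //; lra.
have bk_gt0 : 0 < b k by rewrite lt0r bk_neq0 b_ge0.
(* A point with g k >= 0 is controlled through its mixture with [steepest]. *)
have mk : mixable (k, steepest) by apply/and5P.
have nu_eq : mix_nu * - g steepest = a steepest - mix_max * b steepest.
  by rewrite /mix_nu /slack divfK ?gt_eqF.
have := mix_le_max mk; rewrite /mix /= => mix_le.
rewrite -(ler_pM2r ngs_gt0).
have -> : (mix_nu * g k + a k) * - g steepest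
          = g k * (mix_nu * - g steepest) - g steepest * a k by ring.
rewrite nu_eq; lra.
Qed.

End PairMixing.

Section Triples.
Variables (R : realType) (Ty : finType) (n : nat) (c f : Ty -> nat -> R).

Definition triple := (Ty * 'I_n.+1 * 'I_n.+1 * 'I_n.+1)%type.

Definition ttype (k : triple) : Ty := k.1.1.1.
Definition tleave (k : triple) : nat := k.1.1.2.
Definition tstay (k : triple) : nat := k.1.2.
Definition tjoin (k : triple) : nat := k.2.

Definition triple_ok (k : triple) := (tleave k + tstay k + tjoin k <= n)%N.
Definition triple_delta (k : triple) := dev_delta f (ttype k) (tleave k) (tstay k) (tjoin k).
Definition cost_at_ne (k : triple) := c (ttype k) (tleave k + tstay k).
Definition cost_at_opt (k : triple) := c (ttype k) (tstay k + tjoin k).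

Definition tight_family (rho : R) (I : finType) (tr : I -> triple) (w : I -> R) :=
  [/\ \sum_i w i * triple_delta (tr i) = 0,
      0 < \sum_i w i * cost_at_opt (tr i) &
      \sum_i w i * cost_at_ne (tr i) = rho * \sum_i w i * cost_at_opt (tr i)].

End Triples.

Lemma card_window N lo k : (lo + k <= N)%N ->
  #|[set d : 'I_N | (lo <= d < lo + k)%N]| = k.
Proof.
move=> hiN; rewrite -sum1dep_card -(big_ord_widen_cond _ _ (fun=> 1%N) hiN) /=.
by rewrite -[RHS](addKn lo) -[RHS]muln1 -sum_nat_const_nat big_geq_mkord.
Qed.

Lemma if_window_split (V : nmodType) (F : bool -> V) d lo k l :
  (if (lo <= d < lo + k + l)%N then F (lo + k <= d)%N else 0) =
  (if (lo <= d < lo + k)%N then F false else 0) +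
  (if (lo + k <= d < lo + k + l)%N then F true else 0).
Proof.
case: (ltnP d (lo + k)) => [d_lt|d_ge] /=.
  by rewrite (leq_trans d_lt (leq_addr _ _)) andbT addr0.
have lo_le_d : (lo <= d)%N := leq_trans (leq_addr _ _) d_ge.
by rewrite lo_le_d andbF add0r.
Qed.

Section Circulant.
Variables (R : realType) (m : nat) (Ty : finType) (c f : Ty -> nat -> R).
Local Notation N := m.+1.
Variables (I : finType) (tr : I -> triple Ty N) (w : I -> R).
Hypotheses (tr_ok : forall i, triple_ok (tr i)) (w_ge0 : forall i, 0 <= w i).
Local Notation A i := (tleave (tr i)).
Local Notation X i := (tstay (tr i)).
Local Notation B i := (tjoin (tr i)).
Local Notation Res := (I * 'I_N)%type.

(* Agent p uses resource (i, s) in its equilibrium action iff (p - s) mod N lies in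
   [0, A i + X i), and in its optimal action iff it lies in [A i, A i + X i + B i):
   every resource (i, s) sees exactly the leave/stay/join pattern of [tr i]. *)
Definition offset (p s : 'I_N) : nat := (p - s)%R.

Definition ne_action (p : 'I_N) : {set Res} :=
  [set r | (offset p r.2 < A r.1 + X r.1)%N].
Definition opt_action (p : 'I_N) : {set Res} :=
  [set r | (A r.1 <= offset p r.2 < A r.1 + X r.1 + B r.1)%N].

Definition circulant : game R N Ty Res :=
  Game (fun r => w r.1) (fun r => ttype (tr r.1)) (fun p => [set ne_action p; opt_action p]).

Lemma card_offset_window (s : 'I_N) lo k : (lo + k <= N)%N ->
  #|[set p | (lo <= offset p s < lo + k)%N]| = k.
Proof.
move=> hiN; have sub_inj : injective (fun p : 'I_N => p - s)%R by move=> p q /addIr.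
rewrite -[RHS](card_window hiN) -[RHS](card_preimset _ sub_inj).
by apply: eq_card => p; rewrite !inE.
Qed.

Lemma sum_window (p : 'I_N) (x : R) lo k : (lo + k <= N)%N ->
  \sum_(s : 'I_N) (if (lo <= offset p s < lo + k)%N then x else 0) = x *+ k.
Proof.
move=> hiN; have sub_inj : injective (fun s : 'I_N => p - s)%R.
  by move=> s t /addrI/oppr_inj.
rewrite (reindex_inj sub_inj) /offset.
under eq_bigr do rewrite opprB addrC subrK.
by rewrite -big_mkcond sumr_cond_const card_window.
Qed.

Lemma sum_resources (F : Res -> R) : \sum_r F r = \sum_i \sum_s F (i, s).
Proof. by rewrite pair_bigA; apply: eq_bigr => -[]. Qed.

Lemma ne_window_le i : (A i + X i <= N)%N.
Proof. exact: leq_trans (leq_addr _ _) (tr_ok i). Qed.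

Lemma load_ne r : load ne_action r = (A r.1 + X r.1)%N.
Proof.
rewrite loadE -[RHS](@card_offset_window r.2 0 _ (ne_window_le r.1)).
by apply: eq_card => p; rewrite !inE.
Qed.

Lemma load_opt r : load opt_action r = (X r.1 + B r.1)%N.
Proof.
rewrite loadE -[RHS](@card_offset_window r.2 (A r.1) (X r.1 + B r.1)).
  by apply: eq_card => p; rewrite !inE addnA.
by rewrite addnA; apply: tr_ok.
Qed.

Lemma syscost_circulant (a : profile N Res) (L : I -> nat) :
  (forall r, load a r = L r.1) ->
  syscost c circulant a = N%:R * \sum_i w i * c (ttype (tr i)) (L i).
Proof.
move=> loadL; rewrite /syscost sum_resources mulr_sumr; apply: eq_bigr => i _.
under eq_bigr do rewrite loadL /=.
by rewrite sumr_const card_ord mulr_natl.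
Qed.

Lemma loccost_ne (p : 'I_N) : loccost f circulant p ne_action =
  \sum_i w i * f (ttype (tr i)) (A i + X i) *+ (A i + X i).
Proof.
rewrite /loccost big_mkcond sum_resources; apply: eq_bigr => i _.
under eq_bigr do rewrite load_ne inE /=.
exact: (@sum_window p _ 0 _ (ne_window_le i)).
Qed.

Lemma loccost_deviation (p : 'I_N) :
  loccost f circulant p (upd ne_action p (opt_action p)) =
  \sum_i (w i * f (ttype (tr i)) (A i + X i) *+ X i
          + w i * f (ttype (tr i)) (A i + X i).+1 *+ B i).
Proof.
rewrite /loccost {1}/upd eqxx big_mkcond sum_resources; apply: eq_bigr => i _.
pose F (b : bool) := w i * f (ttype (tr i)) (b + (A i + X i))%N.
rewrite (eq_bigr (fun s => (if (A i <= offset p s < A i + X i)%N then F false else 0)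
    + (if (A i + X i <= offset p s < A i + X i + B i)%N then F true else 0))).
  by rewrite big_split /= !sum_window ?ne_window_le //; apply: tr_ok.
move=> s _; rewrite -if_window_split inE /=; case: ifP => // opt_s.
by rewrite load_upd ?inE // load_ne /= -leqNgt.
Qed.

Lemma loccost_gain (p : 'I_N) :
  loccost f circulant p (upd ne_action p (opt_action p)) - loccost f circulant p ne_action
  = \sum_i w i * triple_delta f (tr i).
Proof.
rewrite loccost_deviation loccost_ne -sumrB; apply: eq_bigr => i _.
rewrite /triple_delta /dev_delta !mulr_natl mulrBr !mulrnAr mulrnDr; lra.
Qed.

Lemma circulant_valid : valid_game circulant.
Proof.
split=> [r|p]; first exact: w_ge0.
by apply/set0Pn; exists (ne_action p); rewrite !inE eqxx.
Qed.

Lemma opt_action_feasible : feasible circulant opt_action.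
Proof. by move=> p; rewrite !inE eqxx orbT. Qed.

Lemma circulant_NE : 0 <= \sum_i w i * triple_delta f (tr i) -> is_NE f circulant ne_action.
Proof.
move=> gain_ge0; split=> [p|p a]; first by rewrite !inE eqxx.
rewrite !inE => /orP[]/eqP->; last by rewrite -subr_ge0 loccost_gain.
have -> : upd ne_action p (ne_action p) = ne_action.
  by apply: funext => q; rewrite /upd; case: eqP => // ->.
exact: lexx.
Qed.

Lemma circulant_tight rho : tight_family c f rho tr w ->
  [/\ is_NE f circulant ne_action,
      syscost c circulant ne_action = rho * syscost c circulant opt_action
    & 0 < syscost c circulant opt_action].
Proof.
case=> gain_eq0 opt_gt0 ne_eq.
rewrite (syscost_circulant (L := fun i => A i + X i)%N load_ne).
rewrite (syscost_circulant (L := fun i => X i + B i)%N load_opt).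
split; first by apply: circulant_NE; rewrite gain_eq0.
  by rewrite [RHS]mulrCA; congr (_ * _); exact: ne_eq.
by apply: mulr_gt0; [rewrite ltr0n | exact: opt_gt0].
Qed.

End Circulant.

Section LPSolution.
Variables (R : realType) (Ty : finType) (n : nat) (c f : Ty -> nat -> R).
Hypotheses (n_gt0 : (0 < n)%N) (c0 : forall t, c t 0%N = 0).
Hypothesis c_gt0 : forall t x, (1 <= x <= n)%N -> 0 < c t x.
Hypothesis f_gt0 : forall t x, (1 <= x <= n)%N -> 0 < f t x.

Lemma c_ge0 t x : (x <= n)%N -> 0 <= c t x.
Proof. by case: x => [|x] x_le; rewrite ?c0 // ltW // c_gt0. Qed.

Lemma stay_join_le (k : triple Ty n) : triple_ok k -> (tstay k + tjoin k <= n)%N.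
Proof. by apply: leq_trans; rewrite -addnA leq_addl. Qed.

Lemma cost_at_opt_ge0 : {in @triple_ok Ty n, forall k, 0 <= cost_at_opt c k}.
Proof. by move=> k /stay_join_le; apply: c_ge0. Qed.

Lemma cost_at_opt_eq0 : {in @triple_ok Ty n, forall k, cost_at_opt c k = 0 ->
  triple_delta f k < 0 \/ triple_delta f k = 0 /\ cost_at_ne c k = 0}.
Proof.
move=> k k_ok; rewrite /cost_at_opt /triple_delta /cost_at_ne /dev_delta.
have [XB_gt0|] := ltnP 0 (tstay k + tjoin k).
  by move/eqP; rewrite gt_eqF // c_gt0 // XB_gt0 stay_join_le.
rewrite leqn0 addn_eq0 => /andP[/eqP-> /eqP->] _; rewrite mul0r sub0r addn0.
have [->|A_gt0] := posnP (tleave k); [right | left]; first by rewrite mul0r oppr0 c0.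
rewrite oppr_lt0 mulr_gt0 ?ltr0n // f_gt0 // A_gt0.
by apply: leq_trans k_ok; rewrite -addnA leq_addr.
Qed.

Lemma lp_solution : (0 < #|Ty|)%N ->
  exists (rho nu : R) (tr : bool -> triple Ty n) (w : bool -> R),
  [/\ 1 <= rho, 0 < nu, lp_feasible n c f nu rho,
      (forall i, triple_ok (tr i)) /\ (forall i, 0 <= w i)
    & tight_family c f rho tr w].
Proof.
case/card_gt0P => t0 _.
pose one : 'I_n.+1 := Ordinal (n_gt0 : (1 < n.+1)%N).
pose j0 : triple Ty n := (t0, ord0, one, ord0).
pose k0 : triple Ty n := (t0, one, ord0, ord0).
pose D := @triple_ok Ty n; pose g : triple Ty n -> R := triple_delta f.
pose a : triple Ty n -> R := cost_at_ne c; pose b : triple Ty n -> R := cost_at_opt c.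
have c1_gt0 : 0 < c t0 1%N by rewrite c_gt0 ?n_gt0.
have f1_gt0 : 0 < f t0 1%N by rewrite f_gt0 ?n_gt0.
have g_j0 : g j0 = 0 by rewrite /g /triple_delta /dev_delta /= !mul0r subr0.
have g_k0 : g k0 = - f t0 1%N by rewrite /g /triple_delta /dev_delta /= mul0r mul1r sub0r.
(* j0 = (t0, 0, 1, 0) and k0 = (t0, 1, 0, 0) mix with ratio 1, and k0 has positive slack. *)
have mix0 : mixable D g b (j0, k0).
  by apply/and5P; split; rewrite /D /triple_ok /= ?g_j0 ?g_k0 ?oppr_lt0 //.
have [best_ok best_max] := best_mixP a mix0.
have [_ _ steep_max] := steepestP a mix0.
set rho := mix_max D g a b (j0, k0).
set p := best_mix D g a b (j0, k0).
exists rho, (mix_nu D g a b (j0, k0)), (fun i => if i then p.1 else p.2).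
exists (fun i => if i then - g p.2 else g p.1); split.
- have := best_max (j0, k0) mix0; rewrite /mix_ratio /mix /=.
  case/and5P: mix0 => _ _ _ b_j0 _.
  have -> : a j0 = b j0 by rewrite /a /b /cost_at_ne /cost_at_opt /= add0n addn0.
  by rewrite g_j0 g_k0 opprK !mul0r !addr0 divff // mulf_neq0 ?gt_eqF.
- apply: lt_le_trans (steep_max k0 _ _); rewrite ?g_k0 ?oppr_lt0 //.
  rewrite /slack /a /b /cost_at_ne /cost_at_opt g_k0 opprK /= !addn0 c0 mulr0 subr0.
  exact: divr_gt0.
- move=> t A X B hn.
  have hA : (A < n.+1)%N by rewrite ltnS (leq_trans _ hn) // -addnA leq_addr.
  have hX : (X < n.+1)%N by rewrite ltnS (leq_trans _ hn) // addnAC leq_addl.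
  have hB : (B < n.+1)%N by rewrite ltnS (leq_trans _ hn) // leq_addl.
  exact: (mix_dual_feasible cost_at_opt_ge0 cost_at_opt_eq0 mix0
           (k := (t, Ordinal hA, Ordinal hX, Ordinal hB)) hn).
- case/and5P: best_ok => ok1 ok2 g1_ge0 _ g2_lt0.
  by split=> -[] //; rewrite ?oppr_ge0 ltW.
- rewrite /tight_family !big_bool /=; split.
  + by rewrite mulNr mulrC addNr.
  + exact: (mix_b_gt0 cost_at_opt_ge0 best_ok).
  + exact: (mix_max_attained a cost_at_opt_ge0 mix0).
Qed.

End LPSolution.

Theorem theorem4 (R : realType) (n : nat) (Ty : finType) (c f : Ty -> nat -> R) :
  (0 < n)%N -> (0 < #|Ty|)%N ->
  (forall t, c t 0%N = 0) ->
  (forall t x, (1 <= x <= n)%N -> 0 < c t x) ->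
  (forall t x, (1 <= x <= n)%N -> 0 < f t x) ->
  classPoA n c f = classGPoA n c f /\
  exists (Res : finType) (G : @game R n Ty Res),
    valid_game G /\ (#|Res| <= 2 * n)%N /\ pos_opt c G /\
    gamePoA c f G = classGPoA n c f.
Proof.
move=> n_gt0 Ty_gt0 c0 c_gt0 f_gt0; case: n => [//|m] in n_gt0 c_gt0 f_gt0 *.
have [rho [nu [tr [w [rho_ge1 nu_gt0 lp [tr_ok w_ge0] tight]]]]] :=
  lp_solution n_gt0 c0 c_gt0 f_gt0 Ty_gt0.
have rho_gt0 : 0 < rho := lt_le_trans ltr01 rho_ge1.
pose G := circulant tr w.
have vG : valid_game G := circulant_valid tr w_ge0.
have [neNE Cne Copt_gt0] := circulant_tight tr_ok tight.
have posG : pos_opt c G.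
  apply: pos_opt_of_NE (gpoa_feasible_lp nu_gt0 rho_gt0 lp) vG neNE _.
  by rewrite Cne mulr_gt0.
have GPoA_le_G : (classGPoA m.+1 c f <= gamePoA c f G)%E.
  apply: le_trans (classGPoA_le_lp nu_gt0 rho_gt0 lp) _.
  exact: gamePoA_ge vG posG neNE (opt_action_feasible tr w) (ltW rho_gt0) Cne.
have G_le_PoA : (gamePoA c f G <= classPoA m.+1 c f)%E.
  by apply: ereal_sup_ubound; exists (bool * 'I_m.+1)%type, G.
have PoA_le_GPoA := classPoA_le_classGPoA m.+1 c f.
split; first by apply/le_anti; rewrite PoA_le_GPoA (le_trans GPoA_le_G G_le_PoA).
exists (bool * 'I_m.+1)%type, G; split=> //; split.
  by rewrite card_prod card_bool card_ord.
by split=> //; apply/le_anti; rewrite GPoA_le_G (le_trans G_le_PoA PoA_le_GPoA).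
Qed.
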